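(* Let $q$ be a prime power, $2\le n\le m$, let $C\subseteq\mathbb{F}_{q^m}^n$ be a vector rank-metric code, and let $\Gamma$ be a basis of $\mathbb{F}_{q^m}$ over $\mathbb{F}_q$ with dual basis $\Gamma^*$. Then $P(\Gamma(C^{\perp\!\!\perp}),\mathrm c)=P(\Gamma^*(C),\mathrm c)^*=P(\Gamma(C),\mathrm c)^*$ and $P(\Gamma(C^{\perp\!\!\perp}),\mathrm r)=P(\Gamma^*(C),\mathrm r)^*\sim P(\Gamma(C),\mathrm r)^*$.
   Context: A vector rank-metric code is an $\mathbb{F}_{q^m}$-linear subspace $C\subseteq\mathbb{F}_{q^m}^n$; its dual is $C^{\perp\!\!\perp}=\{v\in\mathbb{F}_{q^m}^n\mid\langle v,w\rangle=0\ \forall w\in C\}$ for the standard inner product of $\mathbb{F}_{q^m}^n$. For an $\mathbb{F}_q$-basis $\Gamma=\{\gamma_1,\dots,\gamma_m\}$ of $\mathbb{F}_{q^m}$, the dual basis $\Gamma^*=\{\gamma_1^*,\dots,\gamma_m^*\}$ is the one with $\mathrm{Tr}_{\mathbb{F}_{q^m}/\mathbb{F}_q}(\gamma_i\gamma_j^* )=\delta_{ij}$. For $v\in\mathbb{F}_{q^m}^n$, $\Gamma(v)$ is the unique $n\times m$ matrix over $\mathbb{F}_q$ with $v_i=\sum_j\Gamma(v)_{ij}\gamma_j$, and $\Gamma(C)=\{\Gamma(v)\mid v\in C\}$. For an $\mathbb{F}_q$-subspace $\mathcal{C}$ of $n\times m$ matrices and subspaces $J\subseteq\mathbb{F}_q^n$,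 $K\subseteq\mathbb{F}_q^m$: $\mathcal{C}(J,\mathrm c)=\{M\in\mathcal{C}\mid\mathrm{colsp}(M)\subseteq J\}$, $\mathcal{C}(K,\mathrm r)=\{M\in\mathcal{C}\mid\mathrm{rowsp}(M)\subseteq K\}$, $\rho_{\mathrm c}(\mathcal{C},J)=(\dim\mathcal{C}-\dim\mathcal{C}(J^\perp,\mathrm c))/m$, $\rho_{\mathrm r}(\mathcal{C},K)=(\dim\mathcal{C}-\dim\mathcal{C}(K^\perp,\mathrm r))/n$ ($\perp$ for the standard inner product); $P(\mathcal{C},\mathrm c)=(\mathbb{F}_q^n,\rho_{\mathrm c}(\mathcal{C},\cdot))$, $P(\mathcal{C},\mathrm r)=(\mathbb{F}_q^m,\rho_{\mathrm r}(\mathcal{C},\cdot))$. The dual of a $q$-polymatroid $P=(\mathbb{F}_q^N,\rho)$ is $P^*=(\mathbb{F}_q^N,\rho^* )$ with $\rho^*(A)=\dim(A)-\rho(\mathbb{F}_q^N)+\rho(A^\perp)$. Two pairs $(\mathbb{F}_q^N,\rho_1)$, $(\mathbb{F}_q^N,\rho_2)$ are equivalent ($\sim$) if there is an $\mathbb{F}_q$-linear isomorphism $\varphi$ of $\mathbb{F}_q^N$ with $\rho_1(A)=\rho_2(\varphi(A))$ for all subspaces $A$. *)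

From HB Require Import structures.
From mathcomp Require Import all_boot all_order all_algebra all_field.
From mathcomp Require Import boolp.
Set Implicit Arguments. Unset Strict Implicit. Unset Printing Implicit Defensive.
Import Order.TTheory GRing.Theory Num.Theory.
Local Open Scope ring_scope.

Section RankMetric.
Variables (F : finFieldType) (L : fieldExtType F).

Definition fTr (x : L) : F :=
  \tr (passmx.mxof (vbasis {:L}) (vbasis {:L}) (amull x)).

Definition is_dual_basis m (gam gams : m.-tuple L) : Prop :=
  forall i j : 'I_m, fTr (tnth gam i * tnth gams j) = (i == j)%:R.

Definition GammaV m n (gam : m.-tuple L) (v : 'rV[L]_n) : 'M[F]_(n, m) :=
  \matrix_(i < n, j < m) coord gam j (v 0 i).

(* Gamma(S) = {Gamma(v) | v in S}, as an F-subspace (the F-span of this set,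
   which is the set itself when S is an F-subspace) *)
Definition GammaCode m n (gam : m.-tuple L) (S : 'rV[L]_n -> Prop)
  : {vspace 'M[F]_(n, m)} :=
  << [seq M <- enum 'M[F]_(n, m) | `[< exists2 v, S v & GammaV gam v = M >] ] >>%VS.

Definition ipL n (v w : 'rV[L]_n) : L := \sum_(i < n) v 0 i * w 0 i.
Definition dualCode n (C : {vspace 'rV[L]_n}) : 'rV[L]_n -> Prop :=
  fun v => forall w, w \in C -> ipL v w = 0.
End RankMetric.

(* Subspaces of F^N are represented by square matrices A : 'M[F]_N through their
   row space (mxalgebra); A^perp (standard inner product) is kermx A^T. *)
Definition perpS (F : fieldType) N (A : 'M[F]_N) : 'M[F]_N := kermx A^T.

Section MatrixCodes.
Variables (F : finFieldType) (n m : nat).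
Implicit Type Cm : {vspace 'M[F]_(n, m)}.

Definition subcode_c Cm (J : 'M[F]_n) : {vspace 'M[F]_(n, m)} :=
  << [seq M <- enum 'M[F]_(n, m) | (M \in Cm) && (M^T <= J)%MS] >>%VS.
Definition subcode_r Cm (K : 'M[F]_m) : {vspace 'M[F]_(n, m)} :=
  << [seq M <- enum 'M[F]_(n, m) | (M \in Cm) && (M <= K)%MS] >>%VS.

Definition rho_c Cm (J : 'M[F]_n) : rat :=
  ((\dim Cm)%:R - (\dim (subcode_c Cm (perpS J)))%:R) / m%:R.
Definition rho_r Cm (K : 'M[F]_m) : rat :=
  ((\dim Cm)%:R - (\dim (subcode_r Cm (perpS K)))%:R) / n%:R.
End MatrixCodes.

(* P(C,c) = (F^n, rho_c C) and P(C,r) = (F^m, rho_r C) *)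
Definition Pc (F : finFieldType) n m (Cm : {vspace 'M[F]_(n, m)}) := rho_c Cm.
Definition Pr (F : finFieldType) n m (Cm : {vspace 'M[F]_(n, m)}) := rho_r Cm.

Definition qpm_dual (F : fieldType) N (rho : 'M[F]_N -> rat) : 'M[F]_N -> rat :=
  fun A => (\rank A)%:R - rho 1%:M + rho (perpS A).

Definition qpm_eq (F : fieldType) N (rho1 rho2 : 'M[F]_N -> rat) : Prop :=
  forall A : 'M[F]_N, rho1 A = rho2 A.

Definition qpm_equiv (F : fieldType) N (rho1 rho2 : 'M[F]_N -> rat) : Prop :=
  exists P : 'M[F]_N, P \in unitmx /\ forall A : 'M[F]_N, rho1 A = rho2 (A *m P).

(* The trace form <M, N> = tr (M^T N) on n x m matrices over F is
   nondegenerate, so dim X^perp = nm - dim X.  For dual bases,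
   <Gamma(v), Gamma*(w)> = Tr <v, w>, and nondegeneracy of the field trace
   gives Gamma(C^perp) = Gamma*(C)^perp.  The matrices with column space in J
   (row space in K) form a space V(J) with V(J^perp) = V(J)^perp and
   dim V(J) = rank J * m (resp. rank K * n); with the dimension formula this
   turns the rank function of X^perp into the dual of that of X.  Finally
   Gamma*(v) = Gamma(v) B for an invertible coordinate-change matrix B: right
   multiplication by B fixes every column-support space, whence equality in the
   column case, and sends the row-support space of K to that of K B, whence
   only an equivalence in the row case. *)

From HB Require Import structures.
From mathcomp Require Import all_boot all_order all_algebra all_field.
From mathcomp Require Import boolp.
From mathcomp Require Import zify ring.
Set Implicit Arguments.
Unset Strict Implicit.
Unset Printing Implicit Defensive.
Import Order.TTheory GRing.Theory Num.Theory.
Local Open Scope ring_scope.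

Section TraceForm.
Variables (F : fieldType) (n m : nat).
Implicit Types (M N : 'M[F]_(n, m)) (X Y : {vspace 'M[F]_(n, m)}).

Definition mxdot M N : F := \tr (M^T *m N).

Lemma mxdot_is_linear M : linear_for *%R (mxdot M).
Proof. by move=> a N1 N2; rewrite /mxdot linearP /= mxtraceD mxtraceZ. Qed.
HB.instance Definition _ M :=
  GRing.isLinear.Build F _ F _ (mxdot M) (mxdot_is_linear M).

Lemma mxdotC M N : mxdot M N = mxdot N M.
Proof. by rewrite /mxdot -mxtrace_tr trmx_mul trmxK. Qed.

Lemma mxdotE M N : mxdot M N = \sum_i \sum_j M i j * N i j.
Proof.
rewrite /mxdot /mxtrace exchange_big; apply: eq_bigr => j _.
by rewrite mxE; apply: eq_bigr => i _; rewrite mxE.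
Qed.

Lemma mxdot_delta M i j : mxdot M (delta_mx i j) = M i j.
Proof.
rewrite mxdotE (bigD1 i) //= addrC big1 ?add0r => [|k /negbTE ki]; last first.
  by rewrite big1 // => l _; rewrite mxE ki mulr0.
rewrite (bigD1 j) //= addrC big1 ?add0r => [|l /negbTE lj]; last first.
  by rewrite mxE lj andbF mulr0.
by rewrite mxE !eqxx mulr1.
Qed.

Definition mxdot_vbasis X M : 'rV[F]_(\dim X) := \row_i mxdot M (vbasis X)`_i.

Lemma mxdot_vbasis_is_linear X : linear (mxdot_vbasis X).
Proof.
move=> a M1 M2; apply/rowP=> i.
by rewrite !mxE !(mxdotC _ (vbasis X)`_i) linearP.
Qed.
HB.instance Definition _ X :=
  GRing.isLinear.Build F _ _ _ (mxdot_vbasis X) (mxdot_vbasis_is_linear X).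

Definition orthv X : {vspace 'M[F]_(n, m)} := lker (linfun (mxdot_vbasis X)).

Lemma mem_orthvP X M : reflect {in X, forall N, mxdot M N = 0} (M \in orthv X).
Proof.
rewrite memv_ker lfunE /=; apply: (iffP eqP) => [M_X N /coord_vbasis-> | M_X].
  rewrite linear_sum big1 // => i _; rewrite linearZ /=.
  by move/rowP: M_X => /(_ i); rewrite !mxE => ->; rewrite mulr0.
by apply/rowP=> i; rewrite !mxE M_X // vbasis_mem // mem_nth // size_tuple.
Qed.

Lemma orthvD X Y : orthv (X + Y) = (orthv X :&: orthv Y)%VS.
Proof.
apply/vspaceP=> M; rewrite memv_cap.
apply/mem_orthvP/andP => [M_XY | [/mem_orthvP M_X /mem_orthvP M_Y]].
  by split; apply/mem_orthvP => N N_in; apply: M_XY;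
    [apply: (subvP (addvSl X Y)) | apply: (subvP (addvSr X Y))].
move=> _ /memv_addP[N1 N1_X [N2 N2_Y ->]].
by rewrite linearD /= M_X // M_Y // addr0.
Qed.

Lemma orthvf : orthv fullv = 0%VS.
Proof.
apply/vspaceP=> M; rewrite memv0; apply/mem_orthvP/eqP => [M_full | -> N _].
  by apply/matrixP=> i j; rewrite -mxdot_delta M_full ?memvf // mxE.
by rewrite /mxdot trmx0 mul0mx mxtrace0.
Qed.

Lemma leq_dim_orthv X : (n * m <= \dim (orthv X) + \dim X)%N.
Proof.
have := limg_ker_dim (linfun (mxdot_vbasis X)) fullv.
rewrite capfv dimvf /dim /= => <-; rewrite leq_add2l.
by apply: leq_trans (dimvS (subvf _)) _; rewrite dimvf /dim /= mul1n.
Qed.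

(* Nondegeneracy gives [orthv X :&: orthv X^C = 0], which caps the two lower
   bounds of [leq_dim_orthv] for [X] and [X^C]. *)
Lemma dim_orthv X : (\dim (orthv X) + \dim X = n * m)%N.
Proof.
have := leq_dim_orthv X; have := leq_dim_orthv X^C.
have := dimv_compl X; rewrite dimvf.
have := dimv_sum_cap (orthv X) (orthv X^C).
rewrite -orthvD addv_complf orthvf dimv0 addn0.
have := dimvS (subvf (orthv X + orthv X^C)); rewrite dimvf.
have := dimvS (subvf X); rewrite dimvf.
rewrite /dim /=; lia.
Qed.

Lemma orthvK X : orthv (orthv X) = X.
Proof.
apply/eqP; rewrite eq_sym eqEdim; apply/andP; split.
  apply/subvP=> M M_X; apply/mem_orthvP => N /mem_orthvP N_X.
  by rewrite mxdotC N_X.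
by have := dim_orthv X; have := dim_orthv (orthv X); lia.
Qed.

End TraceForm.

Lemma rank_perpS (F : fieldType) N (J : 'M[F]_N) :
  \rank (perpS J) = (N - \rank J)%N.
Proof. by rewrite /perpS mxrank_ker mxrank_tr. Qed.

Section SupportSpaces.
Variables (F : fieldType) (n m : nat).
Implicit Types (M : 'M[F]_(n, m)) (J : 'M[F]_n) (K B : 'M[F]_m).

Definition colv J : {vspace 'M[F]_(n, m)} :=
  limg (linfun (mulmx (row_base J)^T : 'M_(\rank J, m) -> 'M_(n, m))).

Definition rowv K : {vspace 'M[F]_(n, m)} :=
  limg (linfun (mulmxr (row_base K) : 'M_(n, \rank K) -> 'M_(n, m))).

Lemma mem_colv J M : (M \in colv J) = (M^T <= J)%MS.
Proof.
apply/memv_imgP/idP => [[W _ ->] | ].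
  by rewrite lfunE /= trmx_mul trmxK -(eq_row_base J) submxMl.
rewrite -(eq_row_base J) => /submxP[W def_MT].
by exists W^T; rewrite ?memvf // lfunE /= -trmx_mul -def_MT trmxK.
Qed.

Lemma mem_rowv K M : (M \in rowv K) = (M <= K)%MS.
Proof.
apply/memv_imgP/idP => [[W _ ->] | ].
  by rewrite lfunE /= -(eq_row_base K) submxMl.
by rewrite -(eq_row_base K) => /submxP[W ->]; exists W; rewrite ?memvf // lfunE.
Qed.

Lemma dim_colv J : \dim (colv J) = (\rank J * m)%N.
Proof.
rewrite limg_dim_eq ?dimvf //; apply/eqP; rewrite capfv; apply/lker0P => W1 W2.
rewrite !lfunE /= => /(congr1 trmx); rewrite !trmx_mul !trmxK.
by move/(row_free_inj (row_base_free J)); apply: trmx_inj.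
Qed.

Lemma dim_rowv K : \dim (rowv K) = (\rank K * n)%N.
Proof.
rewrite limg_dim_eq ?dimvf /dim /= 1?mulnC //; apply/eqP; rewrite capfv.
apply/lker0P => W1 W2; rewrite !lfunE.
exact: (row_free_inj (row_base_free K)).
Qed.

Lemma colv_perp J : colv (perpS J) = orthv (colv J).
Proof.
apply/eqP; rewrite eqEdim; apply/andP; split.
  apply/subvP=> M; rewrite mem_colv sub_kermx => /eqP JM0.
  apply/mem_orthvP=> N; rewrite mem_colv => /submxP[W NT].
  rewrite mxdotC /mxdot NT -mulmxA -[J *m M]trmxK trmx_mul JM0.
  by rewrite trmx0 mulmx0 mxtrace0.
have := dim_orthv (colv J); rewrite !dim_colv rank_perpS mulnBl.
by have := rank_leq_col J; nia.
Qed.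

Lemma rowv_perp K : rowv (perpS K) = orthv (rowv K).
Proof.
apply/eqP; rewrite eqEdim; apply/andP; split.
  apply/subvP=> M; rewrite mem_rowv sub_kermx => /eqP MK0.
  apply/mem_orthvP=> N; rewrite mem_rowv => /submxP[W ->].
  rewrite /mxdot mulmxA mxtrace_mulC mulmxA -[K *m M^T]trmxK trmx_mul trmxK.
  by rewrite MK0 trmx0 mul0mx mxtrace0.
have := dim_orthv (rowv K); rewrite !dim_rowv rank_perpS mulnBl.
by have := rank_leq_col K; nia.
Qed.

Definition rmul_lfun B : 'End('M[F]_(n, m)) := linfun (mulmxr B).

Lemma rmul_lfunE B M : rmul_lfun B M = M *m B.
Proof. exact: lfunE. Qed.

Section UnitRightMultiplication.
Variable B : 'M[F]_m.
Hypothesis B_unit : B \in unitmx.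

Lemma lker_rmul : lker (rmul_lfun B) == 0%VS.
Proof.
apply/lker0P => M1 M2; rewrite !rmul_lfunE.
by apply: (row_free_inj _); rewrite row_free_unit.
Qed.

Lemma dim_rmul X : \dim (rmul_lfun B @: X) = \dim X.
Proof. by rewrite limg_dim_eq // (eqP lker_rmul) capv0. Qed.

Lemma limg_rmul_colv J : (rmul_lfun B @: colv J)%VS = colv J.
Proof.
apply/vspaceP=> M; apply/memv_imgP/idP => [[N] | M_J].
  by rewrite !mem_colv => N_J ->; rewrite rmul_lfunE trmx_mul mulmx_sub.
exists (M *m invmx B); last by rewrite rmul_lfunE mulmxKV.
by rewrite mem_colv trmx_mul mulmx_sub // -mem_colv.
Qed.

Lemma limg_rmul_rowv K : (rmul_lfun B @: rowv K)%VS = rowv (K *m B).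
Proof.
apply/vspaceP=> M; apply/memv_imgP/idP => [[N] | M_KB].
  by rewrite mem_rowv => N_K ->; rewrite rmul_lfunE mem_rowv submxMr.
exists (M *m invmx B); last by rewrite rmul_lfunE mulmxKV.
by rewrite mem_rowv -[K](mulmxK B_unit) submxMr // -mem_rowv.
Qed.

End UnitRightMultiplication.
End SupportSpaces.

Arguments rmul_lfun {F n m} B.

Section RhoDuality.
Variables (F : fieldType) (n m N k : nat).
Variable V : 'M[F]_N -> {vspace 'M[F]_(n, m)}.
Hypothesis V_perp : forall J, V (perpS J) = orthv (V J).
Hypothesis dimV : forall J, \dim (V J) = (\rank J * k)%N.
Implicit Types (X : {vspace 'M[F]_(n, m)}) (J : 'M[F]_N).

Definition rhoV X J : rat :=
  ((\dim X)%:R - (\dim (X :&: V (perpS J)))%:R) / k%:R.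

Lemma V_perpSK J : V (perpS (perpS J)) = V J.
Proof. by rewrite !V_perp orthvK. Qed.

Lemma rhoV1 X : rhoV X 1%:M = (\dim X)%:R / k%:R.
Proof.
rewrite /rhoV; suff -> : \dim (X :&: V (perpS 1%:M)) = 0%N by rewrite subr0.
apply/eqP; rewrite -leqn0; apply: leq_trans (dimvS (capvSr _ _)) _.
by rewrite dimV rank_perpS mxrank1 subnn.
Qed.

Lemma rhoV_orthv X J : (0 < k)%N -> rhoV (orthv X) J = qpm_dual (rhoV X) J.
Proof.
move=> k_gt0; rewrite /qpm_dual rhoV1 /rhoV V_perpSK V_perp -orthvD.
have natrE (x y z : nat) : (x + y)%N = z -> (x%:R : rat) = z%:R - y%:R.
  by move=> <-; rewrite natrD addrK.
rewrite (natrE _ _ _ (dim_orthv X)) (natrE _ _ _ (dim_orthv (X + V J))).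
have := dimv_sum_cap X (V J); rewrite dimV => /natrE->; rewrite natrM.
by field; rewrite pnatr_eq0 -lt0n.
Qed.

End RhoDuality.

Section MatrixCodes.
Variables (F : finFieldType) (n m : nat).
Implicit Types (X : {vspace 'M[F]_(n, m)}) (J : 'M[F]_n) (K B : 'M[F]_m).

Lemma mem_span_filter (P : pred 'M[F]_(n, m)) :
  P 0 -> (forall a M N, P M -> P N -> P (a *: M + N)) ->
  forall M, (M \in <<[seq N <- enum 'M[F]_(n, m) | P N]>>%VS) = P M.
Proof.
move=> P0 P_lin M; apply/idP/idP => [|PM]; last first.
  by apply: memv_span; rewrite mem_filter PM mem_enum.
set S := [seq N <- _ | _]; rewrite -[S]/(tval (in_tuple S)) => /coord_span->.
apply: (big_ind P) => // [M1 M2 PM1 PM2 | i _].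
  by rewrite -[M1]scale1r P_lin.
rewrite -[_ *: _]addr0 P_lin //.
by have := mem_nth 0 (ltn_ord i); rewrite mem_filter => /andP[].
Qed.

Lemma subcode_cE X J : subcode_c X J = (X :&: colv m J)%VS.
Proof.
apply/vspaceP=> M; rewrite memv_cap mem_colv; apply: mem_span_filter.
  by rewrite mem0v trmx0 sub0mx.
move=> a M1 M2 /andP[M1_X M1_J] /andP[M2_X M2_J].
by rewrite memvD ?memvZ //= linearP addmx_sub ?scalemx_sub.
Qed.

Lemma subcode_rE X K : subcode_r X K = (X :&: rowv n K)%VS.
Proof.
apply/vspaceP=> M; rewrite memv_cap mem_rowv; apply: mem_span_filter.
  by rewrite mem0v sub0mx.
move=> a M1 M2 /andP[M1_X M1_K] /andP[M2_X M2_K].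
by rewrite memvD ?memvZ //= addmx_sub ?scalemx_sub.
Qed.

Lemma rho_cE X J : rho_c X J = rhoV m (@colv F n m) X J.
Proof. by rewrite /rho_c subcode_cE. Qed.

Lemma rho_rE X K : rho_r X K = rhoV n (@rowv F n m) X K.
Proof. by rewrite /rho_r subcode_rE. Qed.

Lemma rho_c_orthv X J : (0 < m)%N -> rho_c (orthv X) J = qpm_dual (rho_c X) J.
Proof.
move=> m_gt0; rewrite /qpm_dual !rho_cE.
by rewrite rhoV_orthv //; [apply: colv_perp | apply: dim_colv].
Qed.

Lemma rho_r_orthv X K : (0 < n)%N -> rho_r (orthv X) K = qpm_dual (rho_r X) K.
Proof.
move=> n_gt0; rewrite /qpm_dual !rho_rE.
by rewrite rhoV_orthv //; [apply: rowv_perp | apply: dim_rowv].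
Qed.

Lemma rho_c_rmul X B J : B \in unitmx -> rho_c (rmul_lfun B @: X) J = rho_c X J.
Proof.
move=> B_unit; rewrite !rho_cE /rhoV -{1}(limg_rmul_colv B_unit (perpS J)).
by rewrite -lker0_img_cap ?lker_rmul // !dim_rmul.
Qed.

Lemma qpm_dual_rho_r_rmul X B A : B \in unitmx ->
  qpm_dual (rho_r (rmul_lfun B @: X)) A = qpm_dual (rho_r X) (A *m invmx B).
Proof.
move=> B_unit; rewrite /qpm_dual !rho_rE !(rhoV1 (@dim_rowv F n m)) dim_rmul //.
rewrite mxrankMfree ?row_free_unit ?unitmx_inv //; congr (_ + _).
rewrite /rhoV dim_rmul // !(V_perpSK (@rowv_perp F n m)).
have -> : rowv n A = (rmul_lfun B @: rowv n (A *m invmx B))%VS.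
  by rewrite limg_rmul_rowv // mulmxKV.
by rewrite -lker0_img_cap ?lker_rmul // dim_rmul.
Qed.

End MatrixCodes.

Section TraceDualBases.
Variables (F : finFieldType) (L : fieldExtType F).

Lemma fTr_is_linear : linear_for *%R (@fTr F L).
Proof.
by move=> a x y; rewrite /fTr linearP passmx.mxof_linear mxtraceD mxtraceZ.
Qed.
HB.instance Definition _ :=
  GRing.isLinear.Build F L F _ (@fTr F L) fTr_is_linear.

Lemma ipLC n (v w : 'rV[L]_n) : ipL v w = ipL w v.
Proof. by apply: eq_bigr => i _; rewrite mulrC. Qed.

Lemma ipL_is_linear n (v : 'rV[L]_n) : linear_for *%R (ipL v).
Proof.
move=> a w1 w2; rewrite /ipL mulr_sumr -big_split /=.
by apply: eq_bigr => i _; rewrite !mxE mulrDr mulrCA.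
Qed.
HB.instance Definition _ n v :=
  GRing.isLinear.Build L 'rV[L]_n L _ (@ipL F L n v) (ipL_is_linear v).

Lemma GammaV_linear m n (e : m.-tuple L) (a : F) (v w : 'rV[L]_n) :
  GammaV e (a%:A *: v + w) = a *: GammaV e v + GammaV e w.
Proof. by apply/matrixP=> i j; rewrite !mxE mulr_algl linearP. Qed.

Lemma mem_GammaCode m n (e : m.-tuple L) (S : 'rV[L]_n -> Prop) :
  S 0 -> (forall (a : L) v w, S v -> S w -> S (a *: v + w)) ->
  forall M, M \in GammaCode e S <-> exists2 v, S v & GammaV e v = M.
Proof.
move=> S0 S_lin M; rewrite /GammaCode mem_span_filter => [|{M}|{M}].
- by split=> /asboolP.
- apply/asboolP; exists 0 => //; apply/matrixP=> i j.
  by rewrite !mxE linear0.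
move=> a _ _ /asboolP[v Sv <-] /asboolP[w Sw <-]; apply/asboolP.
by exists (a%:A *: v + w); [apply: S_lin | rewrite GammaV_linear].
Qed.

Lemma mem_GammaCode_vspace m n (e : m.-tuple L) (C : {vspace 'rV[L]_n}) M :
  M \in GammaCode e (fun v => v \in C) <-> exists2 v, v \in C & GammaV e v = M.
Proof.
by apply: mem_GammaCode => [|a v w vC wC]; rewrite ?mem0v ?memvD ?memvZ.
Qed.

Lemma mem_GammaCode_dualCode m n (e : m.-tuple L) (C : {vspace 'rV[L]_n}) M :
  M \in GammaCode e (dualCode C) <-> exists2 v, dualCode C v & GammaV e v = M.
Proof.
apply: mem_GammaCode => [w _ | a v1 v2 Dv1 Dv2 w wC]; rewrite ipLC ?linear0 //.
by rewrite linearP /= !(ipLC w) Dv1 // Dv2 // mulr0 addr0.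
Qed.

Section DualBases.
Variables (n m : nat) (gam gams : m.-tuple L).
Hypotheses (gam_basis : basis_of {:L} gam) (gams_dual : is_dual_basis gam gams).

Lemma dual_basisE (i j : 'I_m) : fTr (gam`_i * gams`_j) = (i == j)%:R.
Proof. by rewrite -!tnth_nth gams_dual. Qed.

Lemma fTr_mul_dual (x : L) (j : 'I_m) : fTr (x * gams`_j) = coord gam j x.
Proof.
rewrite {1}(coord_basis gam_basis (memvf x)) mulr_suml linear_sum (bigD1 j) //=.
rewrite addrC big1 ?add0r => [|i /negbTE ij]; last first.
  by rewrite -scalerAl linearZ /= dual_basisE ij mulr0.
by rewrite -scalerAl linearZ /= dual_basisE eqxx mulr1.
Qed.

Lemma fTr_nondegenerate (x : L) : (forall y, fTr (x * y) = 0) -> x = 0.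
Proof.
move=> x_perp; rewrite (coord_basis gam_basis (memvf x)) big1 // => j _.
by rewrite -fTr_mul_dual x_perp scale0r.
Qed.

Lemma dual_basis_basis : basis_of {:L} gams.
Proof.
rewrite basisEfree subvf size_tuple (size_basis gam_basis) leqnn !andbT.
apply/freeP=> k k_gams j.
have := congr1 (fun x => fTr (gam`_j * x)) k_gams.
rewrite /= mulr0 linear0 mulr_sumr linear_sum (bigD1 j) //= addrC big1 ?add0r.
  by rewrite -scalerAr linearZ /= dual_basisE eqxx mulr1.
move=> i /negbTE ji.
by rewrite -scalerAr linearZ /= dual_basisE eq_sym ji mulr0.
Qed.

Lemma mxdot_GammaV (v w : 'rV[L]_n) :
  mxdot (GammaV gam v) (GammaV gams w) = fTr (ipL v w).
Proof.
rewrite mxdotE /ipL linear_sum; apply: eq_bigr => i _.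
rewrite [in RHS](coord_basis dual_basis_basis (memvf (w 0 i))).
rewrite mulr_sumr linear_sum.
by apply: eq_bigr => j _; rewrite !mxE -scalerAr linearZ /= fTr_mul_dual mulrC.
Qed.

Lemma GammaV_surj (M : 'M[F]_(n, m)) : exists v, GammaV gam v = M.
Proof.
exists (\row_i \sum_j M i j *: gam`_j); apply/matrixP=> i j.
by rewrite !mxE coord_sum_free // (basis_free gam_basis).
Qed.

Definition coord_change_mx : 'M[F]_m := \matrix_(j, l) coord gams l gam`_j.

Lemma GammaV_change_basis (v : 'rV[L]_n) :
  GammaV gams v = GammaV gam v *m coord_change_mx.
Proof.
apply/matrixP=> i l; rewrite !mxE {1}(coord_basis gam_basis (memvf (v 0 i))).
by rewrite linear_sum; apply: eq_bigr => j _; rewrite linearZ !mxE.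
Qed.

Lemma coord_change_mx_unit : coord_change_mx \in unitmx.
Proof.
pose B' : 'M[F]_m := \matrix_(l, j) coord gam j gams`_l.
suff /mulmx1_unit[] : coord_change_mx *m B' = 1%:M by [].
apply/matrixP=> j j'; rewrite !mxE.
transitivity (coord gam j' (\sum_l coord gams l gam`_j *: gams`_l)).
  by rewrite linear_sum; apply: eq_bigr => l _; rewrite linearZ !mxE.
rewrite -(coord_basis dual_basis_basis (memvf _)).
by rewrite coord_free // (basis_free gam_basis).
Qed.

Lemma GammaCode_dualCode (C : {vspace 'rV[L]_n}) :
  GammaCode gam (dualCode C) = orthv (GammaCode gams (fun v => v \in C)).
Proof.
apply/vspaceP=> M; apply/idP/idP.
  move/mem_GammaCode_dualCode => [v Dv <-].
  apply/mem_orthvP => _ /mem_GammaCode_vspace [w wC <-].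
  by rewrite mxdot_GammaV Dv // linear0.
have [v <-] := GammaV_surj M; move/mem_orthvP => v_perp.
apply/mem_GammaCode_dualCode; exists v => // w wC.
apply: fTr_nondegenerate => a; rewrite mulrC -linearZ /= -mxdot_GammaV.
by apply: v_perp; apply/mem_GammaCode_vspace; exists (a *: w); rewrite ?memvZ.
Qed.

Lemma GammaCode_change_basis (C : {vspace 'rV[L]_n}) :
  GammaCode gams (fun v => v \in C) =
  (rmul_lfun coord_change_mx @: GammaCode gam (fun v => v \in C))%VS.
Proof.
apply/vspaceP=> M; apply/idP/memv_imgP.
  move/mem_GammaCode_vspace => [v vC <-]; exists (GammaV gam v).
    by apply/mem_GammaCode_vspace; exists v.
  by rewrite rmul_lfunE GammaV_change_basis.
case=> _ /mem_GammaCode_vspace [v vC <-] ->; apply/mem_GammaCode_vspace.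
by exists v; rewrite ?rmul_lfunE ?GammaV_change_basis.
Qed.

End DualBases.
End TraceDualBases.

Unset Implicit Arguments.

Theorem corollary7p2 (F : finFieldType) (L : fieldExtType F) (n m : nat)
  (hn : (2 <= n)%N) (hnm : (n <= m)%N)
  (C : {vspace 'rV[L]_n}) (gam gams : m.-tuple L)
  (hgam : basis_of {:L} gam) (hdual : is_dual_basis gam gams) :
  let GC := GammaCode gam (fun v => v \in C) in
  let GsC := GammaCode gams (fun v => v \in C) in
  let GCd := GammaCode gam (dualCode C) in
  [/\ qpm_eq (Pc GCd) (qpm_dual (Pc GsC)),
      qpm_eq (qpm_dual (Pc GsC)) (qpm_dual (Pc GC)),
      qpm_eq (Pr GCd) (qpm_dual (Pr GsC))
    & qpm_equiv (qpm_dual (Pr GsC)) (qpm_dual (Pr GC))].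
Proof.
move=> GC GsC GCd.
have n_gt0 : (0 < n)%N by apply: leq_trans hn.
have m_gt0 : (0 < m)%N by apply: leq_trans hnm.
have GCdE : GCd = orthv GsC := GammaCode_dualCode hgam hdual C.
have GsCE : GsC = (rmul_lfun (coord_change_mx gam gams) @: GC)%VS :=
  GammaCode_change_basis gams hgam C.
have B_unit := coord_change_mx_unit hgam hdual.
split=> [A | A | A |].
- by rewrite /Pc GCdE rho_c_orthv.
- by rewrite /qpm_dual /Pc GsCE !rho_c_rmul.
- by rewrite /Pr GCdE rho_r_orthv.
exists (invmx (coord_change_mx gam gams)).
split=> [|A]; first by rewrite unitmx_inv.
by rewrite /Pr GsCE qpm_dual_rho_r_rmul.
Qed.
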